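(* Let $T$ be a finite tree and let $P=p_0p_1\dots p_k$ ($k\ge1$) be a path in $T$ such that each of $p_1,\dots,p_{k-1}$ has degree $2$ in $T$. Let $B$ be the vertex set of the component containing $p_k$ of the graph obtained from $T$ by deleting the edges of $P$, and assume $B$ is not trivial (i.e. $p_k$ has a neighbour not on $P$). If $k$ is odd, then for every $\ell\ge1$, \[\omega_{\ell}(p_0,T[B\cup P])-\omega_{\ell}(p_0,P)\leq \omega_{\ell-1}(p_k,T[B\cup P])-\omega_{\ell-1}(p_k,P).\]
   Context: $T[B\cup P]$ is the subgraph of $T$ induced by $B\cup\{p_0,\dots,p_k\}$. For a graph $G$, a vertex $x$ and $\ell\ge0$, $\omega_\ell(x,G)$ is the number of walks of length $\ell$ in $G$ starting at $x$. $P$ is regarded as a graph (the path). *)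

From mathcomp Require Import all_boot all_order all_algebra.
Set Implicit Arguments. Unset Strict Implicit. Unset Printing Implicit Defensive.

Section Graphs.
Variable T : finType.

Definition simple_graph (e : rel T) : Prop :=
  symmetric e /\ irreflexive e.

Definition connected_graph (e : rel T) : Prop :=
  forall x y : T, connect e x y.

Definition acyclic_graph (e : rel T) : Prop :=
  forall c : seq T, 3 <= size c -> uniq c -> ~~ cycle e c.

(* a finite tree (nonempty, since connected graphs here are required to have
   the path vertices; connectivity of the empty graph is vacuous) *)
Definition is_tree (e : rel T) : Prop :=
  [/\ simple_graph e, connected_graph e & acyclic_graph e].

Definition deg (e : rel T) (x : T) : nat := #|[set y | e x y]|.

(* number of walks of length l starting at x in the graph with adjacency r:
   sequences w_0 ... w_l with w_0 = x and r w_i w_{i+1} for all i < l *)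
Definition nwalks (r : rel T) (x : T) (l : nat) : nat :=
  #|[set w : {ffun 'I_l.+1 -> T} | (w ord0 == x) &&
       [forall i : 'I_l, r (w (widen_ord (leqnSn l) i)) (w (lift ord0 i))]]|.

Definition induced (e : rel T) (S : {set T}) : rel T :=
  fun x y => [&& e x y, x \in S & y \in S].

Definition path_edge (p : nat -> T) (k : nat) : rel T :=
  fun x y => [exists i : 'I_k,
     ((x == p i) && (y == p i.+1)) || ((y == p i) && (x == p i.+1))].

Definition path_set (p : nat -> T) (k : nat) : {set T} :=
  [set x | [exists i : 'I_k.+1, x == p i]].

Definition del_path_edges (e : rel T) (p : nat -> T) (k : nat) : rel T :=
  fun x y => e x y && ~~ path_edge p k x y.

Definition compB (e : rel T) (p : nat -> T) (k : nat) : {set T} :=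
  [set x | connect (del_path_edges e p k) (p k) x].

End Graphs.

From mathcomp Require Import all_boot all_order all_algebra.
From mathcomp Require Import zify.
Import Order.TTheory GRing.Theory Num.Theory.
Set Implicit Arguments. Unset Strict Implicit. Unset Printing Implicit Defensive.

(* Let D_j(m) = ω_m(p_j, T[B ∪ P]) − ω_m(p_j, P). Counting walks by their
   first step, D obeys the recurrence of the path itself:
   D_j(m+1) = D_{j-1}(m) + D_{j+1}(m) at inner vertices and D_0(m+1) = D_1(m)
   (acyclicity forbids p_0 ∈ B, so p_1 is the only neighbour of p_0), except at
   p_k, which gains a term c(m) counting walks whose first step enters B.
   Since p_k has a neighbour b in B, c(m+1) ≥ ω_{m+1}(b) ≥ ω_m(p_k) ≥ D_k(m).
   Induction on m then gives D_j(m) ≤ D_{k+1-j}(m) whenever 2j ≤ k+1; for k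
   odd the reflection j ↦ k+1-j fixes the middle vertex, so the induction
   never compares a pair in the wrong order. The theorem is the case j = 1
   combined with D_0(ℓ) = D_1(ℓ-1). *)

Section WalkCount.
Variables (T : finType) (r : rel T).

Definition cons_walk l (x : T) (w : {ffun 'I_l.+1 -> T}) : {ffun 'I_l.+2 -> T} :=
  [ffun i => if unlift ord0 i is Some j then w j else x].

Definition behead_walk l (w : {ffun 'I_l.+2 -> T}) : {ffun 'I_l.+1 -> T} :=
  [ffun j => w (lift ord0 j)].

Lemma nwalks0 x : nwalks r x 0 = 1.
Proof.
rewrite /nwalks (_ : [set _ | _] = [set [ffun=> x]]) ?cards1 //.
apply/setP => w; rewrite !inE; apply/andP/eqP => [[/eqP w0 _]|->].
  by apply/ffunP => i; rewrite ffunE (ord1 i).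
by rewrite ffunE; split => //; apply/forallP => -[].
Qed.

Lemma walk_edges_behead l (w : {ffun 'I_l.+2 -> T}) :
  [forall i : 'I_l.+1, r (w (widen_ord (leqnSn l.+1) i)) (w (lift ord0 i))] =
  r (w ord0) (w (lift ord0 ord0)) &&
  [forall j : 'I_l, r (behead_walk w (widen_ord (leqnSn l) j))
                      (behead_walk w (lift ord0 j))].
Proof.
apply/forallP/andP => [H|[H0 /forallP H]].
  split; first by have := H ord0; congr (r (w _) _); apply: val_inj.
  apply/forallP => j; have := H (lift ord0 j); rewrite !ffunE.
  by congr (r (w _) (w _)); apply: val_inj.
move=> i; case: (unliftP ord0 i) => [j ->|->].
  by have := H j; rewrite !ffunE; congr (r (w _) (w _)); apply: val_inj.
by have := H0; congr (r (w _) _); apply: val_inj.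
Qed.

Lemma nwalksS x l : nwalks r x l.+1 = \sum_(y | r x y) nwalks r y l.
Proof.
rewrite /nwalks -sum1_card.
rewrite (partition_big (fun w : {ffun 'I_l.+2 -> T} => w (lift ord0 ord0)) predT) //.
rewrite [RHS]big_mkcond /=; apply: eq_bigr => y _.
case: ifP => rxy; last first.
  rewrite big_pred0 // => w; rewrite !inE walk_edges_behead.
  apply/negP => /andP[/andP[/eqP w0 /andP[rw _]] /eqP wy].
  by rewrite w0 wy rxy in rw.
rewrite -sum1_card (reindex (@cons_walk l x)) /=.
  apply: eq_bigl => w; rewrite !inE walk_edges_behead !ffunE unlift_none liftK eqxx /=.
  have -> : behead_walk (cons_walk x w) = w by apply/ffunP => j; rewrite !ffunE liftK.
  by case: eqP => [->|_]; rewrite ?rxy ?andbF ?andbT.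
exists (@behead_walk l) => w.
  by rewrite inE => _; apply/ffunP => j; rewrite !ffunE liftK.
rewrite !inE => /andP[/andP[/eqP w0 _] _]; apply/ffunP => i; rewrite !ffunE.
by case: (unliftP ord0 i) => [j ->|->]; rewrite ?ffunE ?w0.
Qed.

Lemma nwalksS_pred1 x y l : r x =1 pred1 y -> nwalks r x l.+1 = nwalks r y l.
Proof. by move=> rx; rewrite nwalksS (big_pred1 y). Qed.

Lemma nwalksS_pred2 x y z l : y != z -> r x =1 [pred u | (u == y) || (u == z)] ->
  nwalks r x l.+1 = nwalks r y l + nwalks r z l.
Proof.
move=> yz rx; rewrite nwalksS (bigD1 y) ?rx /= ?eqxx // (big_pred1 z) // => u /=.
by rewrite rx /=; case: eqVneq => [->|]; rewrite ?(negPf yz) ?andbF ?andbT.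
Qed.

Lemma nwalks_le_nbr x y l : r x y -> nwalks r y l <= nwalks r x l.+1.
Proof. by move=> rxy; rewrite nwalksS (bigD1 y) //= leq_addr. Qed.

End WalkCount.

Section OddPathRecurrence.
Local Open Scope ring_scope.
Variables (k : nat) (D : nat -> nat -> int) (c : nat -> int).
Hypotheses (k_odd : odd k) (D_0 : forall j, D j 0 = 0)
  (D_first : forall m, D 0 m.+1 = D 1 m)
  (D_inner : forall j m, (0 < j < k)%N -> D j m.+1 = D j.-1 m + D j.+1 m)
  (D_last : forall m, D k m.+1 = D k.-1 m + c m)
  (c_ge0 : 0 <= c 0) (D_last_le_c : forall m, D k m <= c m.+1).

Lemma recurrence_reflect_le m j :
  (0 < j)%N -> (j.*2 <= k.+1)%N -> D j m <= D (k.+1 - j) m.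
Proof.
elim/ltn_ind: m j => -[|m] IH j j_gt0 jk; first by rewrite !D_0.
have [jk1|jk1] := eqVneq j.*2 k.+1; first by rewrite (_ : k.+1 - j = j)%N //; lia.
have {jk1} jk2 : (j.*2 < k)%N.
  have : j.*2 != k by apply: contraPneq k_odd => <-; rewrite odd_double.
  lia.
have D_first_le_c : D 0 m <= c m.
  case: m IH => [|m] IH; first by rewrite D_0.
  rewrite D_first; apply: le_trans (D_last_le_c m).
  by have := IH m (ltnW (ltnSn _)) 1%N isT; rewrite subn1; apply; lia.
rewrite D_inner; last lia.
have [j_gt1|j1] := ltnP 1 j.
  rewrite D_inner; last lia.
  rewrite addrC; apply: lerD.
    by rewrite (_ : (k.+1 - j).-1 = k.+1 - j.+1)%N; [apply: IH|]; lia.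
  by rewrite (_ : (k.+1 - j).+1 = k.+1 - j.-1)%N; [apply: IH|]; lia.
have -> : j = 1%N by lia.
rewrite subn1 /= D_last addrC; apply: lerD => //.
by rewrite (_ : k.-1 = k.+1 - 2)%N; [apply: IH|]; lia.
Qed.

Lemma recurrence_first_le_last m : D 0 m.+1 <= D k m.
Proof.
rewrite D_first; have := @recurrence_reflect_le m 1%N isT; rewrite subn1; apply.
by move: k_odd; case: k.
Qed.

End OddPathRecurrence.

Lemma path_mem_pred (T : eqType) (r : rel T) x s z :
  path r x s -> z \in s -> exists y, r y z.
Proof.
elim: s x => // a s IH x /= /andP[rxa ps]; rewrite inE => /orP[/eqP ->|zs].
  by exists x.
exact: IH ps zs.
Qed.

Lemma path_map_iota (T : eqType) (r : rel T) (p : nat -> T) a n :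
  (forall i, a <= i < a + n -> r (p i) (p i.+1)) ->
  path r (p a) (map p (iota a.+1 n)).
Proof.
elim: n a => //= n IH a rp; rewrite rp ?IH // => [i ai|]; [apply: rp|]; lia.
Qed.

Lemma induced_sym (T : finType) (e : rel T) (S : {set T}) :
  symmetric e -> symmetric (induced e S).
Proof. by move=> e_sym x y; rewrite /induced e_sym [(x \in S) && _]andbC. Qed.

Section TreePath.
Variables (T : finType) (e : rel T) (k : nat) (p : nat -> T).
Hypotheses (e_tree : is_tree e) (k_gt0 : 0 < k)
  (p_inj : {in [pred i | i <= k] &, injective p})
  (p_edge : forall i, i < k -> e (p i) (p i.+1))
  (p_deg2 : forall i, 0 < i < k -> deg e (p i) = 2).

Let e_sym : symmetric e. Proof. by case: e_tree => -[]. Qed.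

Local Notation B := (compB e p k).
Local Notation H := (induced e (B :|: path_set p k)).
Local Notation del := (del_path_edges e p k).

Lemma p_eq i j : i <= k -> j <= k -> (p i == p j) = (i == j).
Proof. by move=> ik jk; apply/eqP/eqP => [|->//]; exact: p_inj. Qed.

Lemma path_edgeC : symmetric (path_edge p k).
Proof. by move=> x y; apply: eq_existsb => i; rewrite orbC. Qed.

Lemma path_edge_p j y : j <= k ->
  path_edge p k (p j) y = ((0 < j) && (y == p j.-1)) || ((j < k) && (y == p j.+1)).
Proof.
move=> jk; apply/existsP/idP => [[i /orP[/andP[ji yi]|/andP[yi ji]]]|].
- by rewrite p_eq // ?(ltnW (ltn_ord i)) // in ji; rewrite (eqP ji) ltn_ord yi orbT.
- by rewrite p_eq // in ji; rewrite (eqP ji) /= yi.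
case/orP => /andP[j_gt0 /eqP ->].
  have jk' : j.-1 < k by lia.
  by exists (Ordinal jk'); rewrite /= prednK // !eqxx orbT.
by exists (Ordinal j_gt0); rewrite /= !eqxx.
Qed.

Lemma mem_path_set j : j <= k -> p j \in path_set p k.
Proof. by move=> jk; rewrite inE; apply/existsP; exists (Ordinal (jk : j < k.+1)). Qed.

Lemma pk_in_compB : p k \in B.
Proof. by rewrite inE connect0. Qed.

Lemma e_inner j y : 0 < j < k -> e (p j) y = (y == p j.-1) || (y == p j.+1).
Proof.
move=> /andP[j_gt0 jk].
have sub : [set p j.-1; p j.+1] \subset [set y | e (p j) y].
  apply/subsetP => z; rewrite !inE => /orP[] /eqP ->; last exact: p_edge.
  by rewrite e_sym -{2}(prednK j_gt0); apply: p_edge; lia.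
have nbr : [set p j.-1; p j.+1] = [set y | e (p j) y].
  apply/eqP; rewrite eqEcard sub -/(deg e (p j)) p_deg2 ?j_gt0 //.
  by rewrite cards2 p_eq; lia.
by move/setP/(_ y): nbr; rewrite !inE.
Qed.

Lemma del_path_edgesC : symmetric del.
Proof. by move=> x y; rewrite /del_path_edges e_sym path_edgeC. Qed.

Lemma del_path_edges_inner j x : 0 < j < k -> del x (p j) = false.
Proof.
move=> jk; rewrite del_path_edgesC /del_path_edges e_inner // path_edge_p; last lia.
by case/andP: jk => -> ->; case: (_ == _); case: (_ == _).
Qed.

Lemma p0_notin_compB : p 0 \notin B.
Proof.
case: e_tree => _ _ e_acyclic; rewrite inE; apply/negP => /connectP[s0 del_s0].
case: (shortenP del_s0) => s del_s uniq_s _ s_last.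
pose inner := map p (iota 1 k.-1).
have s_inner j : 0 < j < k -> p j \notin s.
  move=> jk; apply/negP => /(path_mem_pred del_s)[x].
  by rewrite del_path_edges_inner.
have cyc : cycle e (p k :: s ++ inner).
  have iota_k : iota 1 k = rcons (iota 1 k.-1) k.
    by case: (k) k_gt0 => // n _; rewrite -cats1 -[X in iota _ X]addn1 iotaD add1n.
  rewrite /= rcons_cat cat_path -s_last -map_rcons -iota_k.
  rewrite (sub_path _ del_s) => [|x y /andP[]//].
  by apply: (@path_map_iota _ _ _ 0) => i ik; apply: p_edge; lia.
have uniq_c : uniq (p k :: s ++ inner).
  rewrite -cat_cons cat_uniq uniq_s map_inj_in_uniq ?iota_uniq ?andbT; last first.
    by move=> i j; rewrite !mem_iota => ik jk /eqP; rewrite p_eq; [move/eqP| lia | lia].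
  apply/hasPn => z /mapP[j]; rewrite mem_iota => jk ->.
  by rewrite inE negb_or p_eq ?s_inner; lia.
have size_c : 2 < size (p k :: s ++ inner).
  rewrite /= size_cat size_map size_iota.
  case: s {del_s0 uniq_s uniq_c cyc s_inner} del_s s_last => [_ /eqP|y [|z s]] //=.
  - by rewrite eq_sym p_eq //; lia.
  rewrite andbT => del_y y0; case: (ltnP 1 k) => [|k_le1]; first lia.
  move: del_y; rewrite -y0 /del_path_edges path_edge_p //.
  by rewrite (_ : k = 1) //=; [rewrite eqxx andbF | lia].
by move: (e_acyclic _ size_c uniq_c); rewrite cyc.
Qed.

Lemma path_edge_p0 : path_edge p k (p 0) =1 pred1 (p 1).
Proof. by move=> y; rewrite path_edge_p //= k_gt0. Qed.

Lemma path_edge_pk : path_edge p k (p k) =1 pred1 (p k.-1).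
Proof. by move=> y; rewrite path_edge_p // ltnn k_gt0 orbF. Qed.

Lemma induced_p0 : H (p 0) =1 pred1 (p 1).
Proof.
have [[_ e_irr] _ _] := e_tree.
move=> y /=; apply/idP/eqP => [/and3P[e0y _ yBP]|->]; last first.
  by rewrite /induced p_edge // !in_setU !mem_path_set ?orbT.
apply/eqP; apply: contraT => y_neq1.
have del_0y : del (p 0) y by rewrite /del_path_edges e0y path_edge_p //= k_gt0.
have yB : y \in B.
  case/setUP: yBP => //; rewrite inE => /existsP[i /eqP yi]; rewrite yi.
  have [i0|i_gt0] := posnP i; first by move: e0y; rewrite yi i0 e_irr.
  have [ik|ik] := ltnP i k.
    by move: del_0y; rewrite yi del_path_edges_inner ?i_gt0.
  by rewrite (_ : nat_of_ord i = k) ?pk_in_compB //; have := ltn_ord i; lia.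
case/negP: p0_notin_compB; move: yB; rewrite !inE => /connect_trans; apply.
by apply: connect1; rewrite del_path_edgesC.
Qed.

Lemma induced_inner j : 0 < j < k ->
  H (p j) =1 [pred y | (y == p j.-1) || (y == p j.+1)].
Proof.
move=> jk y /=; rewrite /induced e_inner // !in_setU mem_path_set ?orbT; last lia.
by case: eqP => [->|_]; [|case: eqP => [->|//]]; rewrite mem_path_set ?orbT //; lia.
Qed.

Lemma induced_last : H (p k) (p k.-1).
Proof.
have e_k1k : e (p k.-1) (p k) by case: (k) k_gt0 p_edge => // n _; apply.
by rewrite /induced e_sym e_k1k !in_setU !mem_path_set ?orbT //; lia.
Qed.

Lemma exists_compB_nbr : 1 < #|B| -> exists2 b, H (p k) b & b != p k.-1.
Proof.
move=> B_gt1.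
have : 0 < #|B :\ p k| by rewrite (cardsD1 (p k)) pk_in_compB in B_gt1.
rewrite card_gt0 => /set0Pn[x]; rewrite !inE => /andP[x_neq /connectP[[|b s]]].
  by move=> _ /= x_eq; rewrite x_eq eqxx in x_neq.
move=> /= /andP[/andP[e_kb not_pe] _] _; exists b.
  have bB : b \in B by rewrite inE; apply: connect1; rewrite /del_path_edges e_kb.
  by rewrite /induced e_kb !in_setU bB pk_in_compB.
by apply: contraNneq not_pe => ->; rewrite path_edge_pk /=.
Qed.

Definition walk_excess j m : int :=
  ((nwalks H (p j) m)%:Z - (nwalks (path_edge p k) (p j) m)%:Z)%R.

Definition branch_walks m : nat :=
  \sum_(y | H (p k) y && (y != p k.-1)) nwalks H y m.

Lemma walk_excess0 j : walk_excess j 0 = 0%R.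
Proof. by rewrite /walk_excess !nwalks0 subrr. Qed.

Lemma walk_excess_first m : walk_excess 0 m.+1 = walk_excess 1 m.
Proof.
by rewrite /walk_excess (nwalksS_pred1 _ induced_p0) (nwalksS_pred1 _ path_edge_p0).
Qed.

Lemma walk_excess_inner j m : 0 < j < k ->
  walk_excess j m.+1 = (walk_excess j.-1 m + walk_excess j.+1 m)%R.
Proof.
move=> jk; have neq : p j.-1 != p j.+1 by rewrite p_eq; lia.
have pe_j : path_edge p k (p j) =1 [pred y | (y == p j.-1) || (y == p j.+1)].
  by move=> y; rewrite path_edge_p; [case/andP: jk => -> -> | lia].
rewrite /walk_excess (nwalksS_pred2 _ neq (induced_inner jk)) (nwalksS_pred2 _ neq pe_j).
by rewrite !PoszD addrACA opprD.
Qed.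

Lemma walk_excess_last m :
  walk_excess k m.+1 = (walk_excess k.-1 m + (branch_walks m)%:Z)%R.
Proof.
rewrite /walk_excess (nwalksS_pred1 _ path_edge_pk) nwalksS (bigD1 _ induced_last).
by rewrite PoszD addrAC.
Qed.

Lemma walk_excess_last_le_branch m :
  1 < #|B| -> (walk_excess k m <= (branch_walks m.+1)%:Z)%R.
Proof.
case/exists_compB_nbr => b Hkb b_neq.
have Hbk : H b (p k) by rewrite induced_sym.
apply: (@le_trans _ _ (nwalks H (p k) m)%:Z%R); first by rewrite /walk_excess; lia.
rewrite lez_nat; apply: leq_trans (nwalks_le_nbr _ Hbk) _.
by rewrite /branch_walks (bigD1 b) ?Hkb //= leq_addr.
Qed.

End TreePath.

Theorem lemma2 (T : finType) (e : rel T) (k : nat) (p : nat -> T) :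
  is_tree e ->
  1 <= k ->
  {in [pred i | i <= k] &, injective p} ->
  (forall i, i < k -> e (p i) (p i.+1)) ->
  (forall i, 0 < i < k -> deg e (p i) = 2) ->
  1 < #|compB e p k| ->
  odd k ->
  forall l : nat, 1 <= l ->
    ((nwalks (induced e (compB e p k :|: path_set p k)) (p 0%N) l)%:Z
       - (nwalks (path_edge p k) (p 0%N) l)%:Z
     <= (nwalks (induced e (compB e p k :|: path_set p k)) (p k) l.-1)%:Z
       - (nwalks (path_edge p k) (p k) l.-1)%:Z)%R.
Proof.
move=> e_tree k_gt0 p_inj p_edge p_deg2 B_gt1 k_odd [//|l] _.
apply: (recurrence_first_le_last (D := walk_excess e k p)
          (c := fun m => (branch_walks e k p m)%:Z%R) k_odd).
- exact: walk_excess0.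
- exact: walk_excess_first.
- exact: walk_excess_inner.
- exact: walk_excess_last.
- by [].
- by move=> m; apply: walk_excess_last_le_branch.
Qed.
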